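(* Define $A_0:=1$ and, for integers $m\ge1$, $A_m:=\frac{1\cdot3\cdot5\cdots(2m-1)}{m!}=\frac{(2m)!}{2^m(m!)^2}$. For integers $m,n\ge0$ and $0\le r\le\min(m,n)$ set $$A_{m,n}^r:=\frac{A_{m-r}A_rA_{n-r}}{A_{n+m-r}}\cdot\frac{2n+2m-4r+1}{2n+2m-2r+1},\qquad B_{m,n}^r:=\frac{\sqrt{(2m+1)(2n+1)}}{2m+2n-4r+1}\,A_{m,n}^r .$$ Then there is a constant $C>0$ such that $B_{m,n}^r\le C$ for all integers $m,n\ge0$ and all $0\le r\le\min(m,n)$. *)

From Stdlib Require Import Arith Reals Lra Lia.
Open Scope R_scope.

(* A_m = (2m)! / (2^m (m!)^2); for m = 0 this equals 1 = A_0. *)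
Definition A (m : nat) : R :=
  INR (Factorial.fact (2 * m)) / (2 ^ m * (INR (Factorial.fact m)) ^ 2).

(* A_{m,n}^r, for r <= min(m,n) (natural subtraction is exact there). *)
Definition Amnr (m n r : nat) : R :=
  (A (m - r) * A r * A (n - r) / A (n + m - r)) *
  ((2 * INR n + 2 * INR m - 4 * INR r + 1) /
   (2 * INR n + 2 * INR m - 2 * INR r + 1)).

Definition Bmnr (m n r : nat) : R :=
  sqrt ((2 * INR m + 1) * (2 * INR n + 1)) /
  (2 * INR m + 2 * INR n - 4 * INR r + 1) * Amnr m n r.

(* Write m = a + r and n = c + r, and put N = a + r + c.  In terms of
   Q k = A_k^2 / 4^k = (binom(2k,k) / 4^k)^2 the powers of 4 cancel and
   B^2 = (2m+1)(2n+1) Q_a Q_r Q_c / ((2N+1)^2 Q_N).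
   The Wallis-type bounds 1/(4k+1) <= Q k <= 1/(k+1) reduce B <= 2 to a
   polynomial inequality in a, r, c. *)

From Stdlib Require Import Reals Lra Lia.
Open Scope R_scope.

Lemma A_succ k : A (S k) * (INR k + 1) = A k * (2 * INR k + 1).
Proof.
  unfold A.
  replace (2 * S k)%nat with (S (S (2 * k))) by lia.
  change (Factorial.fact (S (S (2 * k))))
    with (S (S (2 * k)) * (S (2 * k) * Factorial.fact (2 * k)))%nat.
  change (Factorial.fact (S k)) with (S k * Factorial.fact k)%nat.
  rewrite !mult_INR, !S_INR, mult_INR.
  pose proof (INR_fact_neq_0 k). pose proof (pos_INR k).
  pose proof (pow_nonzero 2 k ltac:(lra)).
  simpl pow. simpl INR. field. repeat split; lra.
Qed.

Lemma A_pos k : 0 < A k.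
Proof.
  unfold A. pose proof (lt_0_INR _ (Factorial.lt_O_fact (2 * k))).
  pose proof (lt_0_INR _ (Factorial.lt_O_fact k)).
  apply Rdiv_lt_0_compat; [lra|].
  apply Rmult_lt_0_compat; apply pow_lt; lra.
Qed.

Definition Q (k : nat) : R := A k ^ 2 / 4 ^ k.

Lemma Q_pos k : 0 < Q k.
Proof. unfold Q. pose proof (A_pos k). apply Rdiv_lt_0_compat; [nra | apply pow_lt; lra]. Qed.

Lemma Q_succ k : Q (S k) * (4 * (INR k + 1) ^ 2) = Q k * (2 * INR k + 1) ^ 2.
Proof.
  unfold Q. pose proof (pow_lt 4 k ltac:(lra)).
  transitivity ((A (S k) * (INR k + 1)) ^ 2 / 4 ^ k).
  - simpl pow. field. lra.
  - rewrite A_succ. field. lra.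
Qed.

Lemma Q_upper_bound k : Q k * (INR k + 1) <= 1.
Proof.
  induction k as [|k IH].
  - unfold Q, A. simpl. lra.
  - pose proof (Q_succ k). pose proof (Q_pos k). pose proof (Q_pos (S k)).
    pose proof (pos_INR k). rewrite S_INR. set (x := INR k) in *.
    assert (Q (S k) * (x + 1 + 1) * (4 * (x + 1) ^ 3)
            = Q k * (x + 1) * ((2 * x + 1) ^ 2 * (x + 2))) by nra.
    assert ((2 * x + 1) ^ 2 * (x + 2) <= 4 * (x + 1) ^ 3) by nra.
    assert (0 <= (2 * x + 1) ^ 2 * (x + 2)) by nra.
    nra.
Qed.

Lemma Q_lower_bound k : 1 <= Q k * (4 * INR k + 1).
Proof.
  induction k as [|k IH].
  - unfold Q, A. simpl. lra.
  - pose proof (Q_succ k). pose proof (pos_INR k). rewrite S_INR.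
    set (x := INR k) in *.
    assert (Q (S k) * (4 * (x + 1) + 1) * (4 * (x + 1) ^ 2 * (4 * x + 1))
            = Q k * (4 * x + 1) * ((2 * x + 1) ^ 2 * (4 * x + 5))) by nra.
    assert (4 * (x + 1) ^ 2 * (4 * x + 1) <= (2 * x + 1) ^ 2 * (4 * x + 5)) by nra.
    assert (0 < 4 * (x + 1) ^ 2 * (4 * x + 1)) by nra.
    nra.
Qed.

Lemma A_ratio_sq a r c :
  (A a * A r * A c / A (a + r + c)) ^ 2 = Q a * Q r * Q c / Q (a + r + c).
Proof.
  unfold Q. rewrite !pow_add.
  pose proof (A_pos (a + r + c)). pose proof (pow_lt 4 a ltac:(lra)).
  pose proof (pow_lt 4 r ltac:(lra)). pose proof (pow_lt 4 c ltac:(lra)).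
  field. lra.
Qed.

Lemma cross_weight_le x y z : 0 <= x -> 0 <= y -> 0 <= z ->
  (2 * (x + y) + 1) * (2 * (z + y) + 1) * (4 * (x + y + z) + 1)
  <= 4 * (2 * (x + y + z) + 1) ^ 2 * ((x + 1) * (y + 1) * (z + 1)).
Proof.
  intros Hx Hy Hz.
  assert (0 <= x * y) by nra. assert (0 <= y * z) by nra. assert (0 <= x * z) by nra.
  assert (0 <= x * y * z) by nra.
  nra.
Qed.

Lemma Q_triple_le a r c :
  Q a * Q r * Q c * ((INR a + 1) * (INR r + 1) * (INR c + 1)) <= 1.
Proof.
  assert (Hk : forall k, 0 <= Q k * (INR k + 1) <= 1).
  { intro k. pose proof (Q_pos k). pose proof (pos_INR k). split; [nra | apply Q_upper_bound]. }
  replace (Q a * Q r * Q c * ((INR a + 1) * (INR r + 1) * (INR c + 1)))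
    with ((Q a * (INR a + 1)) * (Q r * (INR r + 1)) * (Q c * (INR c + 1))) by ring.
  pose proof (Hk a). pose proof (Hk r). pose proof (Hk c).
  assert (0 <= Q a * (INR a + 1) * (Q r * (INR r + 1)) <= 1) by (split; nra).
  nra.
Qed.

Lemma Q_triple_bound a r c :
  (2 * INR (a + r) + 1) * (2 * INR (c + r) + 1) * (Q a * Q r * Q c)
  <= 4 * (2 * INR (a + r + c) + 1) ^ 2 * Q (a + r + c).
Proof.
  pose proof (Q_triple_le a r c) as Hprod. pose proof (Q_lower_bound (a + r + c)) as HN.
  pose proof (Q_pos a) as Qa. pose proof (Q_pos r) as Qr. pose proof (Q_pos c).
  pose proof (pos_INR a). pose proof (pos_INR r). pose proof (pos_INR c).
  pose proof (cross_weight_le (INR a) (INR r) (INR c)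
                (pos_INR a) (pos_INR r) (pos_INR c)) as Hw.
  rewrite !plus_INR in *.
  set (N := INR a + INR r + INR c) in *.
  set (K := (INR a + 1) * (INR r + 1) * (INR c + 1)) in *.
  set (P := (2 * (INR a + INR r) + 1) * (2 * (INR c + INR r) + 1)) in *.
  set (Q3 := Q a * Q r * Q c) in *.
  assert (0 <= Q3) by (unfold Q3; pose proof (Rmult_lt_0_compat _ _ Qa Qr); nra).
  assert (HM : 0 <= 4 * (2 * N + 1) ^ 2) by (apply Rmult_le_pos; [lra | apply pow2_ge_0]).
  assert (P * (4 * N + 1) * Q3 <= 4 * (2 * N + 1) ^ 2 * K * Q3)
    by (apply Rmult_le_compat_r; assumption).
  assert (4 * (2 * N + 1) ^ 2 * (Q3 * K) <= 4 * (2 * N + 1) ^ 2 * 1)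
    by (apply Rmult_le_compat_l; assumption).
  assert (4 * (2 * N + 1) ^ 2 * 1 <= 4 * (2 * N + 1) ^ 2 * (Q (a + r + c) * (4 * N + 1)))
    by (apply Rmult_le_compat_l; assumption).
  assert (0 < 4 * N + 1) by (unfold N; lra).
  apply (Rmult_le_reg_r (4 * N + 1)); [assumption | nra].
Qed.

Lemma Bmnr_shift a r c :
  Bmnr (a + r) (c + r) r =
  sqrt ((2 * INR (a + r) + 1) * (2 * INR (c + r) + 1))
  * (A a * A r * A c / A (a + r + c)) / (2 * INR (a + r + c) + 1).
Proof.
  unfold Bmnr, Amnr.
  replace (a + r - r)%nat with a by lia.
  replace (c + r - r)%nat with c by lia.
  replace (c + r + (a + r) - r)%nat with (a + r + c)%nat by lia.
  pose proof (pos_INR a). pose proof (pos_INR r). pose proof (pos_INR c).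
  pose proof (A_pos (a + r + c)).
  rewrite !plus_INR. field. lra.
Qed.

Lemma Bmnr_le_2 a r c : Bmnr (a + r) (c + r) r <= 2.
Proof.
  rewrite Bmnr_shift.
  pose proof (pos_INR (a + r)). pose proof (pos_INR (c + r)).
  pose proof (pos_INR (a + r + c)).
  pose proof (Q_pos (a + r + c)).
  assert (HX : 0 <= A a * A r * A c / A (a + r + c)).
  { pose proof (A_pos a). pose proof (A_pos r). pose proof (A_pos c).
    pose proof (A_pos (a + r + c)).
    left. apply Rdiv_lt_0_compat; [apply Rmult_lt_0_compat; [nra|] |]; lra. }
  apply (Rmult_le_reg_r (2 * INR (a + r + c) + 1)); [lra|].
  unfold Rdiv at 1. rewrite Rmult_assoc, Rinv_l, Rmult_1_r by lra.
  rewrite <- (sqrt_pow2 _ HX), <- sqrt_mult by (try apply pow2_ge_0; nra).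
  rewrite <- (sqrt_pow2 (2 * (2 * INR (a + r + c) + 1))) by lra.
  apply sqrt_le_1_alt.
  rewrite A_ratio_sq.
  pose proof (Q_triple_bound a r c).
  apply (Rmult_le_reg_r (Q (a + r + c))); [assumption|].
  field_simplify; lra.
Qed.

Theorem mainTheorem1 :
  exists C : R, 0 < C /\
    forall m n r : nat, (r <= Nat.min m n)%nat -> Bmnr m n r <= C.
Proof.
  exists 2. split; [lra|].
  intros m n r Hr.
  replace m with (m - r + r)%nat by lia.
  replace n with (n - r + r)%nat by lia.
  apply Bmnr_le_2.
Qed.
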